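(* Let $Q$ be a connected nicely-graded complete $\tau$-slice in an acyclic stable $n$-translation quiver $\overline Q$ with finitely many $\tau$-orbits. Then there is a sequence $\delta_1,\dots,\delta_r$ of $\tau$-mutations (each $\delta_t$ being $s^+_j$ for a source $j$, or $s^-_j$ for a sink $j$, of $\delta_{t-1}\cdots\delta_1Q$) such that the depth of $\delta_r\cdots\delta_1Q$ is $n$.
   Context: $k$ is a field. Bound quivers have relations that are linear combinations of paths of equal length $\ge2$ with common source and target; bound paths are paths nonzero in the quotient algebra. A stable $n$-translation quiver is the bound quiver of a graded self-injective algebra of Loewy length $n+2$ (generated in degrees $0,1$) with the bijection $\tau$ on vertices induced by the Nakayama permutation (each bound path of length $n+1$ goes from $\tau i$ to $i$). For $\overline Q$ acyclic with finitely many $\tau$-orbits, a complete $\tau$-slice is a convex full subquiver meeting each $\tau$-orbit in exactly one vertex; $\tau$-mutations: for a sink $j$, $s_j^-Q$ is the full subquiver on $(Q_0\setminus\{j\})\cup\{\tau j\}$; for a source $j$, $s_j^+Q$ is the full subquiver on $(Q_0\setminus\{j\})\cup\{\tau^{-1}j\}$; these are again complete $\tau$-slices. A connected quiver is nicely-graded if there is $u:Q_0\to\mathbb Z$ with $u(j)=u(i)+1$ for every arrow $i\to j$ (equivalently, every cyclic walk has zero grade, the grade of a walk being the number of arrows traversed forwards minus the number traversed backwards); such $u$ is unique up to an additive constant. The depth of a finite connected nicely-graded quiver is $\max_{Q_0}u-\min_{Q_0}u$. *)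

From HB Require Import structures.
From mathcomp Require Import all_boot all_algebra.
From Stdlib Require Import Relation_Operators.
Set Implicit Arguments. Unset Strict Implicit. Unset Printing Implicit Defensive.
Import GRing.Theory Num.Theory.
Local Open Scope ring_scope.

(* Paths are written
   left to right: (v, [:: a1; ...; am]) starts at v, a1 starts at v,
   a_(l+1) starts at the target of a_l.  (v, [::]) is the trivial path e_v. *)
Section Quiver.
Variables (V A : eqType) (src tgt : A -> V).

Definition qpath := (V * seq A)%type.

Fixpoint valid_from (v : V) (l : seq A) : bool :=
  if l is a :: l' then (src a == v) && valid_from (tgt a) l' else true.

Definition pvalid (p : qpath) : bool := valid_from p.1 p.2.
Definition pstart (p : qpath) : V := p.1.
Definition pend (p : qpath) : V := foldl (fun _ a => tgt a) p.1 p.2.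
Definition plen (p : qpath) : nat := size p.2.
Definition pverts (p : qpath) : seq V := p.1 :: map tgt p.2.
Definition pcomp (p q : qpath) : qpath := (p.1, p.2 ++ q.2).
Definition arrow_path (a : A) : qpath := (src a, [:: a]).

Definition acyclic : Prop :=
  forall p, pvalid p -> (0 < plen p)%N -> pend p <> pstart p.

(* bound quivers are locally finite *)
Definition locally_finite : Prop :=
  forall v, exists s : seq A, forall a, (src a == v) || (tgt a == v) -> a \in s.

Section Algebra.
Variable k : fieldType.

Definition lincomb := seq (k * qpath)%type.
Definition coef (f : lincomb) (p : qpath) : k := \sum_(x <- f | x.2 == p) x.1.
Definition lc_eq (f g : lincomb) : Prop := forall p, coef f p = coef g p.
Definition lc_path (p : qpath) : lincomb := [:: (1, p)].
Definition lc_mul3 (c : k) (u : qpath) (r : lincomb) (w : qpath) : lincomb :=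
  [seq (c * x.1, pcomp (pcomp u x.2) w) | x <- r].

Definition is_relation (r : lincomb) : Prop :=
  exists (i j : V) (l : nat), (2 <= l)%N /\
    forall x, x \in r -> [/\ pvalid x.2, pstart x.2 = i, pend x.2 = j & plen x.2 = l].

(* f lies in the two-sided ideal generated by the relations rho:
   f = sum_t c_t u_t r_t w_t with r_t in rho and u_t, w_t composable paths *)
Definition in_ideal (rho : lincomb -> Prop) (f : lincomb) : Prop :=
  exists g : seq (k * qpath * lincomb * qpath)%type,
    (forall y, y \in g ->
       [/\ rho y.1.2, pvalid y.1.1.2, pvalid y.2 &
           forall x, x \in y.1.2 -> pend y.1.1.2 = pstart x.2 /\ pend x.2 = pstart y.2])
    /\ lc_eq f (flatten [seq lc_mul3 y.1.1.1 y.1.1.2 y.1.2 y.2 | y <- g]).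

Definition bound_path (rho : lincomb -> Prop) (p : qpath) : Prop :=
  pvalid p /\ ~ in_ideal rho (lc_path p).

(* linear combination of (valid) paths from i to j, i.e. an element
   representing an element of e_j (kQ) e_i *)
Definition lc_from_to (i j : V) (f : lincomb) : Prop :=
  forall x, x \in f -> [/\ pvalid x.2, pstart x.2 = i & pend x.2 = j].

Definition bil (beta : qpath -> qpath -> k) (f g : lincomb) : k :=
  \sum_(x <- f) \sum_(y <- g) x.1 * y.1 * beta x.2 y.2.

(* The indecomposable projective P_a = Lambda e_a (at vertex x: paths a -> x
   modulo I) is isomorphic, as a Lambda-module (= representation of the bound
   quiver), to the indecomposable injective I_b = D(e_b Lambda) (at vertex x:
   the dual of paths x -> b modulo I).  Such an isomorphism is given by a
   family of pairings beta_x : (a -> x) x (x -> b) -> k that are well defined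
   modulo I, nondegenerate on both sides (bijectivity of each component) and
   compatible with the action of the arrows (module homomorphism). *)
Definition proj_iso_inj (rho : lincomb -> Prop) (a b : V) : Prop :=
  exists beta : qpath -> qpath -> k,
  [/\ (forall x f g, lc_from_to a x f -> lc_from_to x b g ->
          in_ideal rho f -> bil beta f g = 0),
      (forall x f g, lc_from_to a x f -> lc_from_to x b g ->
          in_ideal rho g -> bil beta f g = 0),
      (forall x f, lc_from_to a x f ->
          (forall g, lc_from_to x b g -> bil beta f g = 0) -> in_ideal rho f),
      (forall x g, lc_from_to x b g ->
          (forall f, lc_from_to a x f -> bil beta f g = 0) -> in_ideal rho g) &
      (forall (arr : A) (u v : qpath), pvalid u -> pvalid v ->
          pstart u = a -> pend u = src arr -> pstart v = tgt arr -> pend v = b ->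
          beta (pcomp u (arrow_path arr)) v = beta u (pcomp (arrow_path arr) v))].

(* (Q, rho, tau) is a stable n-translation quiver: the bound quiver of the
   graded algebra Lambda = kQ/(rho) (graded by path length, generated in
   degrees 0 and 1), which is self-injective of Loewy length n+2, with tau
   the bijection induced by the Nakayama permutation: P_(tau i) = I_i, so that
   bound paths of length n+1 go from tau i to i. *)
Definition stable_translation_quiver (n : nat) (rho : lincomb -> Prop)
    (tau : V -> V) : Prop :=
  [/\ locally_finite,
      (forall r, rho r -> is_relation r),
      bijective tau,
      (forall p, pvalid p -> plen p = n.+2 -> in_ideal rho (lc_path p)) /\
      (exists p, pvalid p /\ plen p = n.+1 /\ ~ in_ideal rho (lc_path p)) &
      (forall i, proj_iso_inj rho (tau i) i)].

End Algebra.

Section Slices.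
Variable tau : V -> V.

Definition same_orbit (v w : V) : Prop :=
  exists m : nat, iter m tau v = w \/ iter m tau w = v.

Definition finitely_many_orbits : Prop :=
  exists s : seq V, forall v, exists w, w \in s /\ same_orbit v w.

(* full subquivers are given by their vertex sets S *)
Definition convex (S : V -> Prop) : Prop :=
  forall p, pvalid p -> S (pstart p) -> S (pend p) ->
    forall v, v \in pverts p -> S v.

Definition complete_slice (S : V -> Prop) : Prop :=
  [/\ convex S,
      (forall v, exists w, S w /\ same_orbit v w) &
      (forall w w', S w -> S w' -> same_orbit w w' -> w = w')].

Definition adjS (S : V -> Prop) (x y : V) : Prop :=
  S x /\ S y /\ exists a, (src a = x /\ tgt a = y) \/ (src a = y /\ tgt a = x).

Definition connected (S : V -> Prop) : Prop :=
  (exists x, S x) /\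
  forall x y, S x -> S y -> clos_refl_trans V (adjS S) x y.

Definition nice_grading (S : V -> Prop) (u : V -> int) : Prop :=
  forall a, S (src a) -> S (tgt a) -> u (tgt a) = u (src a) + 1.

Definition nicely_graded (S : V -> Prop) : Prop :=
  connected S /\ exists u, nice_grading S u.

Definition has_depth (S : V -> Prop) (d : int) : Prop :=
  connected S /\ exists u, [/\ nice_grading S u,
     (exists x y, [/\ S x, S y & u y - u x = d]) &
     (forall x y, S x -> S y -> u y - u x <= d)].

Definition is_sink (S : V -> Prop) (j : V) : Prop :=
  S j /\ forall a, src a = j -> ~ S (tgt a).
Definition is_source (S : V -> Prop) (j : V) : Prop :=
  S j /\ forall a, tgt a = j -> ~ S (src a).

Definition tau_mutation (S S' : V -> Prop) : Prop :=
  exists j,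
    (is_sink S j /\ forall v, S' v <-> (S v /\ v <> j) \/ v = tau j) \/
    (is_source S j /\ forall v, S' v <-> (S v /\ v <> j) \/ tau v = j).

End Slices.
End Quiver.

From Pilot Require Import Defs.
From HB Require Import structures.
From mathcomp Require Import all_boot all_order all_algebra zify ring.
From Stdlib Require Import Relation_Operators Classical ClassicalEpsilon.
Set Implicit Arguments. Unset Strict Implicit. Unset Printing Implicit Defensive.
Import Order.TTheory GRing.Theory Num.Theory.
(* Re-import so that [Defs.pcomp] shadows ssrfun's [pcomp]. *)
Import Defs.
Local Open Scope ring_scope.

(* The isomorphisms P_(tau i) ~ I_i are nondegenerate pairings beta_i between paths
   tau i ~> x and x ~> i.  As the relations are homogeneous and the quiver is acyclic,
   all paths p with beta_i p e_i <> 0 (socle paths) have one common length; extending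
   arrows to socle paths on either side shows that this length is invariant along arrows
   and tau-orbits, hence equals the Loewy length n+1.  So tau and tau^-1 map arrows to
   arrows, each arrow i -> j comes with a path tau j ~> i of length n, and each x with a
   path tau x ~> x of length n+1.  With convexity of the slice, these paths extend the
   grading u of Q to a grading of the whole quiver in which tau lowers degrees by n+1.
   For any c, the window {v | c <= grade v <= c + n} meets each tau-orbit once, is
   connected and has depth n, and mutating Q at a source of minimal or a sink of maximal
   degree moves it strictly closer to the window. *)

Lemma exists_seq_min (T : eqType) (f : T -> int) (l : seq T) :
  l != [::] -> exists2 j, j \in l & {in l, forall y, f j <= f y}.
Proof.
elim: l => // a [|b l] IH _; first by exists a; rewrite ?mem_head // => y /[!inE] /eqP->.
have [j jl j_min] := IH isT; have [le_aj|lt_ja] := lerP (f a) (f j).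
  exists a; rewrite ?mem_head // => y /[!inE] /orP[/eqP->//|yl].
  by apply: le_trans le_aj (j_min y yl).
exists j; first by rewrite inE jl orbT.
by move=> y /[!inE] /orP[/eqP->|/j_min//]; apply: ltW.
Qed.

Definition seq_replace (T : eqType) (j j' : T) (s : seq T) : seq T :=
  [seq if y == j then j' else y | y <- s].

Lemma mem_seq_replace (T : eqType) (j j' v : T) (s : seq T) : j \in s ->
  (v \in seq_replace j j' s) = ((v != j) && (v \in s)) || (v == j').
Proof.
move=> js; apply/mapP/idP => [[y ys ->]|/orP[/andP[vj vs]|/eqP->]].
- by case: (eqVneq y j) => [_|yj]; rewrite ?eqxx ?orbT // yj ys.
- by exists v; rewrite // (negbTE vj).
- by exists j; rewrite ?eqxx.
Qed.

Lemma sumn_replace_le (T : eqType) (f : T -> nat) (j j' : T) (s : seq T) :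
  (f j' <= f j)%N -> (sumn (map f (seq_replace j j' s)) <= sumn (map f s))%N.
Proof. by move=> le_f; elim: s => //= a s IH; case: eqVneq => [->|_]; lia. Qed.

Lemma sumn_replace_lt (T : eqType) (f : T -> nat) (j j' : T) (s : seq T) :
  j \in s -> (f j' < f j)%N -> (sumn (map f (seq_replace j j' s)) < sumn (map f s))%N.
Proof.
move=> + lt_f; elim: s => //= a s IH; rewrite in_cons.
have := sumn_replace_le s (ltnW lt_f); case: (eqVneq a j) => [->|aj] le_s.
  by move=> _; lia.
by move=> /IH; lia.
Qed.

Section Paths.
Variables (V A : eqType) (src tgt : A -> V).
Implicit Types (p q r : qpath V A) (v x y : V) (a : A) (l : seq A).

Local Notation pvalid := (pvalid src tgt).
Local Notation pend := (pend tgt).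

Definition epath v : qpath V A := (v, [::]).

Definition is_path x y (m : nat) p : Prop :=
  [/\ pvalid p, pstart p = x, pend p = y & plen p = m].

Lemma pvalid_arrow a : pvalid (arrow_path src a).
Proof. by rewrite /pvalid /= eqxx. Qed.

Lemma pcompA p q r : pcomp (pcomp p q) r = pcomp p (pcomp q r).
Proof. by rewrite /pcomp catA. Qed.

Lemma plen_pcomp p q : plen (pcomp p q) = (plen p + plen q)%N.
Proof. exact: size_cat. Qed.

Lemma pend_pcomp p q : pend p = pstart q -> pend (pcomp p q) = pend q.
Proof. by case: p q => v l [w m]; rewrite /pend /= foldl_cat => ->. Qed.

Lemma valid_from_cat v l1 l2 : valid_from src tgt v (l1 ++ l2) =
  valid_from src tgt v l1 && valid_from src tgt (pend (v, l1)) l2.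
Proof. by elim: l1 v => [|a l IH] v //=; rewrite IH andbA. Qed.

Lemma pvalid_pcomp p q :
  pvalid p -> pvalid q -> pend p = pstart q -> pvalid (pcomp p q).
Proof. by case: p q => v l [w m]; rewrite /pvalid /pstart /= valid_from_cat => -> vm ->. Qed.

Lemma is_path_pcomp x y z (m1 m2 : nat) p q :
  is_path x y m1 p -> is_path y z m2 q -> is_path x z (m1 + m2)%N (pcomp p q).
Proof.
move=> [vp <- ep <-] [vq sq <- <-]; split=> //; last exact: plen_pcomp.
- by apply: pvalid_pcomp; rewrite ?ep.
- by apply: pend_pcomp; rewrite ep.
Qed.

Lemma plen0_epath p : plen p = 0%N -> p = epath (pstart p).
Proof. by case: p => v []. Qed.

Lemma plen1_arrow p : pvalid p -> plen p = 1%N ->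
  exists a, [/\ p = arrow_path src a, src a = pstart p & tgt a = pend p].
Proof.
by case: p => v [|a [|//]] //= /andP[/eqP sa _] _; exists a; rewrite /arrow_path sa.
Qed.

Lemma psplit p (m : nat) : pvalid p -> (m <= plen p)%N ->
  exists p1 p2, [/\ p = pcomp p1 p2, is_path (pstart p) (pstart p2) m p1
                  & is_path (pstart p2) (pend p) (plen p - m)%N p2].
Proof.
case: p => v l vl ml; exists (v, take m l), (pend (v, take m l), drop m l).
move: vl; rewrite /pvalid /= -{1}(cat_take_drop m l) valid_from_cat => /andP[v1 v2].
rewrite /pcomp /= cat_take_drop; split=> //; split=> //.
- exact: size_takel.
- by rewrite /pend /= -foldl_cat cat_take_drop.
- exact: size_drop.
Qed.

Lemma pend_in_pverts p : pend p \in pverts tgt p.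
Proof.
case: p => v l; rewrite /pend /pverts /=.
by elim: l v => [|a l IH] v; rewrite ?mem_seq1 // in_cons IH orbT.
Qed.

Lemma pverts_pcompl p q x : x \in pverts tgt p -> x \in pverts tgt (pcomp p q).
Proof. by rewrite /pverts map_cat -cat_cons mem_cat => ->. Qed.

Lemma acyclic_arrow : acyclic src tgt -> forall a, src a <> tgt a.
Proof. by move=> acyc a eq_st; apply: (acyc (arrow_path src a)); rewrite ?pvalid_arrow. Qed.

Lemma acyclic_loop p : acyclic src tgt -> pvalid p -> pend p = pstart p -> plen p = 0%N.
Proof. by move=> acyc vp loop; case: (posnP (plen p)) => // /(acyc _ vp). Qed.

Lemma nice_grading_path (P : V -> Prop) (u : V -> int) x y (m : nat) p :
  nice_grading src tgt P u -> is_path x y m p -> {in pverts tgt p, forall z, P z} ->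
  u y = u x + m%:Z /\ {in pverts tgt p, forall z, u x <= u z <= u x + m%:Z}.
Proof.
case: p => v l gr [+ <- <- <-]; rewrite /pvalid /pstart /plen /=.
elim: l v => [|a l IH] v /=.
  by move=> _ _; rewrite addr0; split=> // z; rewrite mem_seq1 => /eqP->; rewrite lexx.
move=> /andP[/eqP sa vl] Pl.
have ua : u (tgt a) = u v + 1.
  by rewrite -sa; apply: gr; apply: Pl; rewrite ?sa !in_cons eqxx ?orbT.
have [IH1 IH2] := IH _ vl (fun z zl => Pl z (@mem_behead _ (v :: _) _ zl)).
split; first by rewrite -/(pend (tgt a, l)) in IH1 *; rewrite IH1 ua; lia.
move=> z; rewrite in_cons => /orP[/eqP->|/IH2] /=; rewrite ?ua; lia.
Qed.

Lemma adjS_crt_sym (P : V -> Prop) x y :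
  clos_refl_trans V (adjS src tgt P) x y -> clos_refl_trans V (adjS src tgt P) y x.
Proof.
elim=> [v w [Pv [Pw [b vw]]]|v|v w z _ wv _ zw]; last exact: rt_trans zw wv.
  by apply: rt_step; split=> //; split=> //; exists b; case: vw; [right|left].
exact: rt_refl.
Qed.

Lemma is_path_connect (P : V -> Prop) x y (m : nat) p :
  is_path x y m p -> {in pverts tgt p, forall z, P z} ->
  clos_refl_trans V (adjS src tgt P) x y.
Proof.
case: p => v l [+ <- <- _]; rewrite /pvalid /pstart /=.
elim: l v => [|a l IH] v /=; first by move=> _ _; apply: rt_refl.
move=> /andP[/eqP sa vl] Pl; apply: rt_trans (IH _ vl _); last first.
  by move=> z zl; apply: Pl; rewrite in_cons zl orbT.
apply: rt_step; split; first by apply: Pl; rewrite mem_head.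
by split; [apply: Pl; rewrite !in_cons eqxx orbT | exists a; left].
Qed.

Lemma has_depth_ext (P Q : V -> Prop) (d : int) :
  (forall v, P v <-> Q v) -> has_depth src tgt P d -> has_depth src tgt Q d.
Proof.
move=> PQ [[[x Px] P_conn] [u [u_gr [x1 [y1 [Px1 Py1 d_xy]]] d_max]]].
have adjPQ v w : adjS src tgt P v w -> adjS src tgt Q v w.
  by case=> /PQ Qv [/PQ Qw vw].
split; first split; first by exists x; apply/PQ.
  move=> v w /PQ Pv /PQ Pw.
  elim: (P_conn v w Pv Pw) => [v' w' /adjPQ|v'|v' w' z _ vw _ wz]; last exact: rt_trans vw wz.
    exact: rt_step.
  exact: rt_refl.
exists u; split.
- by move=> b /PQ Pb /PQ Pb'; apply: u_gr.
- by exists x1, y1; split=> //; apply/PQ.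
- by move=> v w /PQ Pv /PQ Pw; apply: d_max.
Qed.

End Paths.
Arguments epath {V A} v.

Section HomogeneousIdeal.
Variables (k : fieldType) (V A : eqType) (src tgt : A -> V) (rho : lincomb V A k -> Prop).
Hypothesis rho_rel : forall r, rho r -> is_relation src tgt r.
Implicit Types (p : qpath V A) (f : lincomb V A k).

Local Notation ideal := (in_ideal src tgt rho).
Local Notation term := (k * qpath V A * lincomb V A k * qpath V A)%type.

Lemma coef_flatten (T : Type) (F : T -> lincomb V A k) (g : seq T) p :
  coef (flatten (map F g)) p = \sum_(y <- g) coef (F y) p.
Proof. by rewrite /coef big_flatten big_map. Qed.

Lemma coef_eq0 f p : (forall x, x \in f -> x.2 != p) -> coef f p = 0.
Proof. by move=> f_p; rewrite /coef big_seq_cond big1 // => x /andP[/f_p/negbTE->]. Qed.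

(* All paths of [c u r w] have the length of [u r_0 w] for the first summand [r_0] of [r]. *)
Definition term_len (y : term) : nat :=
  (plen y.1.1.2 + plen (head (0%R, y.1.1.2) y.1.2).2 + plen y.2)%N.

Lemma plen_lc_mul3 c u r w x : rho r -> x \in lc_mul3 c u r w ->
  plen x.2 = term_len (c, u, r, w) /\ (2 <= plen x.2)%N.
Proof.
move=> /rho_rel[i [j [m [m_ge2 r_hom]]]] /mapP[x0 x0r ->] /=.
have [_ _ _ lx0] := r_hom x0 x0r.
have r_head : head (0%R, u) r \in r by case: r x0r {r_hom} => // *; apply: mem_head.
have [_ _ _ lhead] := r_hom _ r_head.
by rewrite /term_len /= !plen_pcomp lx0 lhead; split=> //; lia.
Qed.

Lemma short_path_notin_ideal p : (plen p <= 1)%N -> ~ ideal (lc_path k p).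
Proof.
move=> p_short [g [g_gen /(_ p)]].
rewrite {1}/coef big_cons big_nil eqxx addr0 coef_flatten big_seq big1.
  by move/eqP; rewrite oner_eq0.
move=> y /g_gen[rho_y _ _ _]; apply: coef_eq0 => x /(plen_lc_mul3 rho_y)[_].
by apply: contraTneq => ->; rewrite -ltnNge ltnS.
Qed.

Lemma in_ideal_homogeneous (m : nat) f :
  ideal f -> ideal [seq x <- f | plen x.2 == m].
Proof.
move=> [g [g_gen f_g]]; exists [seq y <- g | term_len y == m]; split.
  by move=> y; rewrite mem_filter => /andP[_ /g_gen].
have coef_term y p : y \in g -> plen p != term_len y ->
    coef (lc_mul3 y.1.1.1 y.1.1.2 y.1.2 y.2) p = 0.
  case: y => [[[c u] r] w] /g_gen[rho_r _ _ _] /= p_len; apply: coef_eq0 => x.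
  by move=> /(plen_lc_mul3 rho_r)[x_len _]; apply: contra_neq p_len => <-.
move=> p; rewrite coef_flatten /coef big_filter_cond big_filter.
have [p_m|p_m] := eqVneq (plen p) m.
  rewrite (eq_bigl (fun x => x.2 == p)); last first.
    by move=> x /=; case: (eqVneq x.2 p) => [->|]; rewrite ?p_m ?eqxx ?andbF.
  rewrite -/(coef f p) f_g coef_flatten [RHS]big_mkcond /=.
  apply: eq_big_seq => y yg; case: eqP => // y_m.
  by apply: coef_term => //; rewrite p_m eq_sym; apply/eqP.
rewrite big1 => [|x /andP[/eqP x_m /eqP x_p]]; last by rewrite -x_p x_m eqxx in p_m.
rewrite big_seq_cond big1 // => y /andP[yg /eqP y_m].
by apply: coef_term; rewrite // y_m.
Qed.

End HomogeneousIdeal.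

Section Pairing.
Variables (k : fieldType) (V A : eqType) (src tgt : A -> V) (rho : lincomb V A k -> Prop).
Implicit Types (p q : qpath V A) (f g : lincomb V A k) (beta : qpath V A -> qpath V A -> k).

Local Notation pvalid := (pvalid src tgt).
Local Notation pend := (pend tgt).
Local Notation ideal := (in_ideal src tgt rho).
Local Notation bound := (bound_path src tgt rho).
Local Notation lc_from_to := (lc_from_to src tgt).

Definition proj_inj_pairing (a b : V) beta : Prop :=
  [/\ (forall x f g, lc_from_to a x f -> lc_from_to x b g -> ideal f -> bil beta f g = 0),
      (forall x f g, lc_from_to a x f -> lc_from_to x b g -> ideal g -> bil beta f g = 0),
      (forall x f, lc_from_to a x f ->
          (forall g, lc_from_to x b g -> bil beta f g = 0) -> ideal f),
      (forall x g, lc_from_to x b g ->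
          (forall f, lc_from_to a x f -> bil beta f g = 0) -> ideal g) &
      (forall (arr : A) p q, pvalid p -> pvalid q ->
          pstart p = a -> pend p = src arr -> pstart q = tgt arr -> pend q = b ->
          beta (pcomp p (arrow_path src arr)) q = beta p (pcomp (arrow_path src arr) q))].

Lemma proj_iso_injP a b :
  proj_iso_inj src tgt rho a b -> exists beta, proj_inj_pairing a b beta.
Proof. by []. Qed.

Lemma bil_lc_path beta p q : bil beta (lc_path k p) (lc_path k q) = beta p q.
Proof. by rewrite /bil !big_seq1 !mul1r. Qed.

Lemma lc_from_to_path x y p :
  pvalid p -> pstart p = x -> pend p = y -> lc_from_to x y (lc_path k p).
Proof. by move=> vp sp ep z; rewrite mem_seq1 => /eqP->. Qed.

Lemma bil_neq0 beta f g :
  bil beta f g != 0 -> exists x y, [/\ x \in f, y \in g & beta x.2 y.2 != 0].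
Proof.
move=> beta_fg; apply: NNPP => no_term; move: beta_fg.
rewrite /bil big_seq big1 ?eqxx // => x xf; rewrite big_seq big1 // => y yg.
have [->|beta_xy] := eqVneq (beta x.2 y.2) 0; first by rewrite mulr0.
by case: no_term; exists x, y.
Qed.

Variables (a b : V) (beta : qpath V A -> qpath V A -> k).
Hypothesis beta_iso : proj_inj_pairing a b beta.

(* Paths [a ~> b] whose image under [P_a = I_b] is nonzero in [I_b(b)], the socle. *)
Definition socle_path p : Prop :=
  [/\ pvalid p, pstart p = a, pend p = b & beta p (epath b) != 0].

Lemma pairing_pcomp p q : pvalid p -> pvalid q ->
  pstart p = a -> pend p = pstart q -> pend q = b ->
  beta p q = beta (pcomp p q) (epath b).
Proof.
have [_ _ _ _ beta_arrow] := beta_iso.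
case: q => w l; elim: l p w => [|c l IH] p w vp vq sp ep eq.
  by move: eq; rewrite /pend /= => <-; rewrite /pcomp cats0 -surjective_pairing.
move: vq; rewrite /pvalid /= => /andP[/eqP sc vl]; rewrite /pstart /= in ep.
have -> : (w, c :: l) = pcomp (arrow_path src c) (tgt c, l) by rewrite /pcomp /= sc.
have vpc : pvalid (pcomp p (arrow_path src c)).
  by apply: pvalid_pcomp; rewrite ?pvalid_arrow // ep -sc.
rewrite -beta_arrow ?ep ?sc // -pcompA IH //.
by rewrite pend_pcomp // ep -sc.
Qed.

Lemma pairing_neq0_bound p q : pvalid p -> pvalid q ->
  pstart p = a -> pend p = pstart q -> pend q = b -> beta p q != 0 -> bound p /\ bound q.
Proof.
have [beta_idl beta_idr _ _ _] := beta_iso.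
move=> vp vq sp epq eq beta_pq; split; split=> // p_id; move: beta_pq.
  by rewrite -bil_lc_path (beta_idl (pend p)) ?eqxx //; apply: lc_from_to_path.
by rewrite -bil_lc_path (beta_idr (pend p)) ?eqxx //; apply: lc_from_to_path.
Qed.

Lemma socle_path_bound p q : pvalid p -> pvalid q -> pend p = pstart q ->
  socle_path (pcomp p q) -> bound p /\ bound q.
Proof.
move=> vp vq epq [_ sp epq_b beta_pq]; rewrite pend_pcomp // in epq_b.
by apply: pairing_neq0_bound; rewrite ?(pairing_pcomp vp vq).
Qed.

Lemma bound_path_extr p : bound p -> pstart p = a ->
  exists q, [/\ pvalid q, pstart q = pend p & socle_path (pcomp p q)].
Proof.
have [_ _ beta_ndl _ _] := beta_iso.
move=> [vp p_nid] sp; apply: NNPP => no_ext; apply/p_nid/(beta_ndl (pend p)).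
  exact: lc_from_to_path.
move=> g g_ft; have [//|/bil_neq0[x [y [+ yg beta_xy]]]] := eqVneq (bil beta (lc_path k p) g) 0.
rewrite mem_seq1 => /eqP x_p; have [vy sy ey] := g_ft y yg.
case: no_ext; exists y.2; split=> //; split; rewrite ?pend_pcomp //; first exact: pvalid_pcomp.
by move: beta_xy; rewrite x_p /= (pairing_pcomp vp vy).
Qed.

Lemma bound_path_extl q : bound q -> pend q = b ->
  exists p, [/\ pvalid p, pend p = pstart q & socle_path (pcomp p q)].
Proof.
have [_ _ _ beta_ndr _] := beta_iso.
move=> [vq q_nid] eq; apply: NNPP => no_ext; apply/q_nid/(beta_ndr (pstart q)).
  exact: lc_from_to_path.
move=> f f_ft; have [//|/bil_neq0[x [y [xf + beta_xy]]]] := eqVneq (bil beta f (lc_path k q)) 0.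
rewrite mem_seq1 => /eqP y_q; have [vx sx ex] := f_ft x xf.
case: no_ext; exists x.2; split=> //; split; rewrite ?pend_pcomp //; first exact: pvalid_pcomp.
by move: beta_xy; rewrite y_q /= (pairing_pcomp vx vq).
Qed.

(* The combination [beta q e_b * p - beta p e_b * q] pairs to zero with everything, since
   by acyclicity the only path from [b] to [b] is [e_b]; it thus lies in the ideal, and so
   does its homogeneous part [beta q e_b * p] if the lengths differ. *)
Lemma socle_path_plen : (forall r, rho r -> is_relation src tgt r) -> acyclic src tgt ->
  forall p q, socle_path p -> socle_path q -> plen p = plen q.
Proof.
move=> rho_rel acyc p q [vp sp ep beta_p] [vq sq eq beta_q]; apply: NNPP => pq_len.
have [beta_idl _ beta_ndl _ _] := beta_iso.
pose f : lincomb V A k := [:: (beta q (epath b), p); (- beta p (epath b), q)].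
have f_ft : lc_from_to a b f by move=> x; rewrite !inE => /orP[] /eqP->.
have f_id : ideal f.
  apply: (beta_ndl b) => // g g_ft.
  have g_triv y : y \in g -> y.2 = epath b.
    move=> /g_ft[vy sy ey]; have y_loop : pend y.2 = pstart y.2 by rewrite ey sy.
    by rewrite (plen0_epath (acyclic_loop acyc vy y_loop)) sy.
  rewrite /bil !big_cons big_nil addr0 -big_split big_seq big1 // => y /g_triv->.
  by rewrite /=; ring.
have := in_ideal_homogeneous rho_rel (plen p) f_id; rewrite /= eqxx.
have /negbTE-> : plen q != plen p by apply/eqP => /esym.
have p_ft : lc_from_to a b [:: (beta q (epath b), p)].
  by move=> x; rewrite mem_seq1 => /eqP->.
have e_ft : lc_from_to b b (lc_path k (epath b)) by apply: lc_from_to_path.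
move=> /(beta_idl b _ _ p_ft e_ft) /eqP.
by rewrite /bil !big_seq1 mulr1 mulf_eq0 (negbTE beta_p) (negbTE beta_q).
Qed.

Lemma socle_path_plen_le (n : nat) :
  (forall p, pvalid p -> plen p = n.+2 -> ideal (lc_path k p)) ->
  forall p, socle_path p -> (plen p <= n.+1)%N.
Proof.
move=> rad_n p [vp sp ep beta_p]; rewrite leqNgt; apply/negP => p_long.
have [p1 [p2 [p_eq [vp1 sp1 ep1 lp1] [vp2 _ ep2 _]]]] := psplit vp p_long.
have [[_ p1_nid] _] : bound p1 /\ bound p2.
  apply: pairing_neq0_bound => //; rewrite ?sp1 ?ep2 //.
  by rewrite (pairing_pcomp vp1 vp2) ?sp1 ?ep2 // -p_eq.
exact/p1_nid/rad_n.
Qed.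

End Pairing.

Section Orbits.
Variables (V A : eqType) (src tgt : A -> V) (tau tau' : V -> V).
Hypotheses (tauK : cancel tau tau') (tauVK : cancel tau' tau).
Implicit Types (x y z : V) (m : nat).

Local Notation orbit := (same_orbit tau).

Lemma iter_tauK m : cancel (iter m tau) (iter m tau').
Proof. by elim: m => // m IH x; rewrite iterSr iterS tauK IH. Qed.

Lemma iter_tauVK m : cancel (iter m tau') (iter m tau).
Proof. by elim: m => // m IH x; rewrite iterSr iterS tauVK IH. Qed.

Lemma same_orbitP x y : orbit x y <-> exists m1 m2, iter m1 tau x = iter m2 tau y.
Proof.
split=> [[m [xy|yx]]|[m1 [m2 xy]]]; first by exists m, 0%N.
  by exists 0%N, m.
have [le12|lt21] := leqP m1 m2.
  exists (m2 - m1)%N; right; apply: (can_inj (iter_tauK m1)).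
  by rewrite -iterD subnKC.
exists (m1 - m2)%N; left; apply: (can_inj (iter_tauK m2)).
by rewrite -iterD subnKC // ltnW.
Qed.

Lemma same_orbit_refl x : orbit x x.
Proof. by exists 0%N; left. Qed.

Lemma same_orbit_sym x y : orbit x y -> orbit y x.
Proof. by case=> m [xy|yx]; exists m; [right|left]. Qed.

Lemma same_orbit_trans x y z : orbit x y -> orbit y z -> orbit x z.
Proof.
move=> /same_orbitP[a [b xy]] /same_orbitP[c [d yz]]; apply/same_orbitP.
by exists (c + a)%N, (b + d)%N; rewrite !iterD xy -iterD addnC iterD yz -iterD.
Qed.

Lemma same_orbit_iter m x : orbit x (iter m tau x).
Proof. by exists m; left. Qed.

Lemma same_orbit_iterV m x : orbit x (iter m tau' x).
Proof. by exists m; right; rewrite iter_tauVK. Qed.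

Lemma slice_invariant (T : Type) (f : V -> T) (S : V -> Prop) :
  complete_slice src tgt tau S -> connected src tgt S ->
  (forall x, f (tau x) = f x) -> (forall b, f (src b) = f (tgt b)) ->
  forall x y, f x = f y.
Proof.
move=> [_ S_meets _] [_ S_conn] f_tau f_arrow x y.
have f_orbit v w : orbit v w -> f v = f w.
  have f_iter m u : f (iter m tau u) = f u by elim: m => //= m <-.
  by case=> m [<-|<-]; rewrite f_iter.
have [s [Ss /f_orbit->]] := S_meets x; have [t [St /f_orbit->]] := S_meets y.
by elim: (S_conn s t Ss St) => // [v w [_ [_ [b [[<- <-]|[<- <-]]]]]|u v w _ -> _ ->].
Qed.

End Orbits.

Definition translation_mesh (V A : eqType) (src tgt : A -> V) (n : nat)
    (tau tau' : V -> V) : Prop :=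
  [/\ forall b, exists b', src b' = tau (src b) /\ tgt b' = tau (tgt b),
      forall b, exists b', src b' = tau' (src b) /\ tgt b' = tau' (tgt b),
      forall b, exists p, is_path src tgt (tau (tgt b)) (src b) n p &
      forall x, exists p, is_path src tgt (tau x) x n.+1 p].

Section StableTranslation.
Variables (k : fieldType) (V A : eqType) (src tgt : A -> V) (n : nat).
Variables (rho : lincomb V A k -> Prop) (tau tau' : V -> V) (S : V -> Prop).
Variable beta : V -> qpath V A -> qpath V A -> k.
Implicit Types (b : A) (p : qpath V A) (x y : V).

Local Notation pvalid := (pvalid src tgt).
Local Notation pend := (pend tgt).
Local Notation is_path := (is_path src tgt).
Local Notation bound := (bound_path src tgt rho).
Local Notation socle i := (socle_path src tgt (tau i) i (beta i)).

Hypotheses (rho_rel : forall r, rho r -> is_relation src tgt r) (acyc : acyclic src tgt).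
Hypotheses (tauK : cancel tau tau') (tauVK : cancel tau' tau).
Hypothesis rad_n2 : forall p, pvalid p -> plen p = n.+2 -> in_ideal src tgt rho (lc_path k p).
Hypothesis rad_n1 : exists p, plen p = n.+1 /\ bound p.
Hypothesis beta_iso : forall i, proj_inj_pairing src tgt rho (tau i) i (beta i).
Hypotheses (S_slice : complete_slice src tgt tau S) (S_conn : connected src tgt S).

Lemma socle_path_exists i : exists p, socle i p.
Proof.
have [p [_ _ socle_p]] := bound_path_extl (beta_iso i) (q := epath i)
  (conj erefl (short_path_notin_ideal rho_rel (p := epath i) isT)) erefl.
by exists (pcomp p (epath i)).
Qed.

Definition socle_len i : nat :=
  plen (proj1_sig (constructive_indefinite_description _ (socle_path_exists i))).

Lemma socle_lenP i p : socle i p -> plen p = socle_len i.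
Proof.
rewrite /socle_len; case: constructive_indefinite_description => q socle_q /= socle_p.
exact: (socle_path_plen (beta_iso i) rho_rel acyc).
Qed.

Lemma bound_arrow b : bound (arrow_path src b).
Proof. by split; [apply: pvalid_arrow | apply: short_path_notin_ideal]. Qed.

(* Extending the arrow [b] to a socle path [f b] at [tgt b], and then [f] to a socle path
   [f' f] at [src b]. *)
Lemma socle_extl_arrow b : exists f f',
  [/\ is_path (tau (tgt b)) (src b) (plen f) f,
      is_path (tau (src b)) (tau (tgt b)) (plen f') f',
      socle_len (tgt b) = (plen f).+1,
      socle_len (src b) = (plen f' + plen f)%N & (0 < plen f')%N].
Proof.
have [f [vf ef socle_fb]] := bound_path_extl (beta_iso (tgt b)) (bound_arrow b) erefl.
have [f_bound _] := socle_path_bound (beta_iso _) vf (pvalid_arrow _ _ b) ef socle_fb.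
have [f' [vf' ef' socle_f'f]] := bound_path_extl (beta_iso (src b)) f_bound ef.
have [_ sf _ _] := socle_fb; have [_ sf' _ _] := socle_f'f.
exists f, f'; split=> //.
- by split; rewrite // ef'.
- by rewrite -(socle_lenP socle_fb) plen_pcomp addn1.
- by rewrite -(socle_lenP socle_f'f) plen_pcomp.
rewrite lt0n; apply/eqP => /plen0_epath f'_triv.
have f'_loop : pend f' = pstart f' by rewrite {1}f'_triv.
case: (acyclic_arrow acyc (a := b)); apply: (can_inj tauK).
by rewrite -[tau _]sf' -[tau _]sf; apply: etrans (esym f'_loop) ef'.
Qed.

Lemma socle_extr_arrow b : exists g h,
  [/\ is_path (tgt b) (tau' (src b)) (plen g) g,
      is_path (tau' (src b)) (tau' (tgt b)) (plen h) h,
      socle_len (tau' (src b)) = (plen g).+1,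
      socle_len (tau' (tgt b)) = (plen g + plen h)%N & (0 < plen h)%N].
Proof.
have [g [vg sg socle_bg]] :=
  bound_path_extr (beta_iso (tau' (src b))) (bound_arrow b) (esym (tauVK _)).
have [_ g_bound] := socle_path_bound (beta_iso _) (pvalid_arrow _ _ b) vg (esym sg) socle_bg.
have [h [vh sh socle_gh]] :=
  bound_path_extr (beta_iso (tau' (tgt b))) g_bound (etrans sg (esym (tauVK _))).
have [_ _ eg _] := socle_bg; have [_ _ eh _] := socle_gh.
rewrite pend_pcomp // in eg; rewrite pend_pcomp // in eh.
exists g, h; split=> //.
- by split; rewrite // sh.
- by rewrite -(socle_lenP socle_bg) plen_pcomp add1n.
- by rewrite -(socle_lenP socle_gh) plen_pcomp.
rewrite lt0n; apply/eqP => /plen0_epath h_triv.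
case: (acyclic_arrow acyc (a := b)); apply: (can_inj tauVK).
by rewrite -eg -eh h_triv /= -sh.
Qed.

Lemma socle_len_arrow_le b :
  (socle_len (tgt b) <= socle_len (src b))%N /\
  (socle_len (tau' (src b)) <= socle_len (tau' (tgt b)))%N.
Proof.
have [f [f' [_ _ -> -> f'_pos]]] := socle_extl_arrow b.
have [g [h [_ _ -> -> h_pos]]] := socle_extr_arrow b.
split; lia.
Qed.

Lemma socle_len_path p : pvalid p ->
  (socle_len (pend p) <= socle_len (pstart p))%N /\
  (socle_len (tau' (pstart p)) <= socle_len (tau' (pend p)))%N.
Proof.
case: p => v l; rewrite /pvalid /pstart /=; elim: l v => [|a l IH] v //=.
case/andP=> /eqP <- /IH; rewrite -[pend (src a, a :: l)]/(pend (tgt a, l)).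
by have := socle_len_arrow_le a; lia.
Qed.

Lemma socle_len_tau x : socle_len (tau x) = socle_len x.
Proof.
have le_tau y : (socle_len y <= socle_len (tau y))%N /\ (socle_len y <= socle_len (tau' y))%N.
  have [p socle_p] := socle_path_exists y; have [vp sp ep _] := socle_p.
  by have := socle_len_path vp; rewrite sp ep tauK.
have := le_tau x; have := le_tau (tau x); rewrite tauK; lia.
Qed.

Lemma socle_len_arrow b : socle_len (src b) = socle_len (tgt b).
Proof.
have tauV_eq y : socle_len (tau' y) = socle_len y by rewrite -{2}(tauVK y) socle_len_tau.
by have := socle_len_arrow_le b; rewrite !tauV_eq; lia.
Qed.

Lemma socle_len_n x : socle_len x = n.+1.
Proof.
have [p [lp p_bound]] := rad_n1.
have [q [_ _ socle_pq]] := bound_path_extr (beta_iso (tau' (pstart p))) p_bound (esym (tauVK _)).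
have pq_le := socle_path_plen_le (beta_iso _) rad_n2 socle_pq.
have pq_len := socle_lenP socle_pq; rewrite plen_pcomp lp in pq_le pq_len.
rewrite (slice_invariant S_slice S_conn socle_len_tau socle_len_arrow x (tau' (pstart p))).
by rewrite -pq_len; lia.
Qed.

Lemma stable_translation_mesh : translation_mesh src tgt n tau tau'.
Proof.
split=> [b|b|b|x].
- have [f [f' [[vf _ _ _] [vf' sf' ef' _] lf lf' _]]] := socle_extl_arrow b.
  have lf'1 : plen f' = 1%N by move: lf lf'; rewrite !socle_len_n; lia.
  have [b' [_ sb' tb']] := plen1_arrow vf' lf'1.
  by exists b'; rewrite sb' tb' sf' ef'.
- have [g [h [[vg _ _ _] [vh sh eh _] lg lh _]]] := socle_extr_arrow b.
  have lh1 : plen h = 1%N by move: lg lh; rewrite !socle_len_n; lia.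
  have [b' [_ sb' tb']] := plen1_arrow vh lh1.
  by exists b'; rewrite sb' tb' sh eh.
- have [f [_ [f_path _ lf _ _]]] := socle_extl_arrow b.
  by exists f; rewrite (_ : n = plen f) //; move: lf; rewrite socle_len_n; lia.
- have [p socle_p] := socle_path_exists x; have [vp sp ep _] := socle_p.
  by exists p; split; rewrite // (socle_lenP socle_p) socle_len_n.
Qed.

End StableTranslation.

Section Window.
Variables (V A : eqType) (src tgt : A -> V) (n : nat) (tau tau' : V -> V).
Variables (S : V -> Prop) (u : V -> int).
Hypotheses (tauK : cancel tau tau') (tauVK : cancel tau' tau) (acyc : acyclic src tgt).
Hypothesis mesh : translation_mesh src tgt n tau tau'.
Hypotheses (S_slice : complete_slice src tgt tau S) (S_conn : connected src tgt S).
Hypothesis u_grading : nice_grading src tgt S u.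
Implicit Types (b : A) (v w x y z : V) (m : nat).

Local Notation orbit := (same_orbit tau).
Local Notation is_path := (is_path src tgt).

Lemma iter_tau_path m x : exists p, is_path (iter m tau x) x (m * n.+1) p.
Proof.
have [_ _ _ tau_path] := mesh.
elim: m => [|m [p p_path]]; first by exists (epath x).
have [q q_path] := tau_path (iter m tau x).
by exists (pcomp q p); rewrite mulSn; apply: is_path_pcomp q_path p_path.
Qed.

Lemma iter_tau_fixed m x : iter m tau x = x -> m = 0%N.
Proof.
move=> fix_x; have [p [vp sp ep lp]] := iter_tau_path m x.
have /(acyclic_loop acyc vp) : pend tgt p = pstart p by rewrite sp ep.
by rewrite lp; case: m {fix_x sp lp}.
Qed.

Lemma iter_tau_eq m1 m2 x : iter m1 tau x = iter m2 tau x -> m1 = m2.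
Proof.
wlog le12 : m1 m2 / (m1 <= m2)%N.
  move=> hyp eq12; case: (leqP m1 m2) => [le12|/ltnW le21]; first exact: hyp.
  by apply/esym/hyp.
move=> eq12; have : iter (m2 - m1) tau (iter m1 tau x) = iter m1 tau x.
  by rewrite -iterD subnK // eq12.
by move/iter_tau_fixed; lia.
Qed.

Lemma arrow_iter m b : exists b', src b' = iter m tau (src b) /\ tgt b' = iter m tau (tgt b).
Proof.
have [tau_arrow _ _ _] := mesh.
elim: m => [|m [b1 [sb1 tb1]]]; first by exists b.
by have [b' ?] := tau_arrow b1; exists b'; rewrite !iterS -sb1 -tb1.
Qed.

Lemma arrow_iterV m b : exists b', src b' = iter m tau' (src b) /\ tgt b' = iter m tau' (tgt b).
Proof.
have [_ tauV_arrow _ _] := mesh.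
elim: m => [|m [b1 [sb1 tb1]]]; first by exists b.
by have [b' ?] := tauV_arrow b1; exists b'; rewrite !iterS -sb1 -tb1.
Qed.

Lemma slice_mid x y z m1 m2 p q :
  is_path x y m1 p -> is_path y z m2 q -> S x -> S z -> S y.
Proof.
move=> p_path q_path Sx Sz; have [_ sp ep _] := p_path.
have [vpq spq epq _] := is_path_pcomp p_path q_path.
have [S_convex _ _] := S_slice; apply: (S_convex _ vpq); rewrite ?spq ?epq //.
by apply: pverts_pcompl; rewrite -ep pend_in_pverts.
Qed.

Lemma slice_arrow_tgt b : S (src b) -> S (tgt b) \/ S (tau (tgt b)).
Proof.
have [_ S_meets _] := S_slice; have [_ _ mesh_path _] := mesh.
move=> Ssb; have [t [St [m t_orbit]]] := S_meets (tgt b).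
case: m t_orbit => [[/= tb_t|/= t_tb]|m [tb_t|t_tb]]; first by left; rewrite tb_t.
  by left; rewrite -t_tb.
- right; have [p p_path] := iter_tau_path m (tau (tgt b)); have [f f_path] := mesh_path b.
  by apply: (slice_mid p_path f_path) => //; rewrite -iterSr tb_t.
- left; have [p p_path] := iter_tau_path m.+1 t; rewrite t_tb in p_path.
  have b_path : is_path (src b) (tgt b) 1 (arrow_path src b) by split; rewrite ?pvalid_arrow.
  exact: slice_mid b_path p_path Ssb St.
Qed.

(* [grade] extends [u] from the slice to the whole quiver, with [tau] lowering it by [n+1]. *)
Definition graded_as v (g : int) : Prop := exists w m1 m2,
  [/\ S w, iter m1 tau v = iter m2 tau w & g = u w + (m1%:Z - m2%:Z) * n.+1%:Z].

Lemma graded_as_exists v : exists g, graded_as v g.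
Proof.
have [_ S_meets _] := S_slice; have [w [Sw /(same_orbitP tauK)[m1 [m2 vw]]]] := S_meets v.
by exists (u w + (m1%:Z - m2%:Z) * n.+1%:Z), w, m1, m2.
Qed.

Lemma graded_as_uniq v g g' : graded_as v g -> graded_as v g' -> g = g'.
Proof.
have [_ _ S_uniq] := S_slice.
move=> [w [m1 [m2 [Sw vw ->]]]] [w' [m1' [m2' [Sw' vw' ->]]]].
have ww' : w = w'.
  apply: S_uniq => //; apply: (same_orbit_trans tauK (y := v)).
    by apply: same_orbit_sym; apply/(same_orbitP tauK); exists m1, m2.
  by apply/(same_orbitP tauK); exists m1', m2'.
subst w'; have : iter (m1' + m2) tau w = iter (m1 + m2') tau w.
  by rewrite !iterD -vw -vw' -!iterD addnC.
by move/iter_tau_eq => eq_m; have -> : m1%:Z - m2%:Z = m1'%:Z - m2'%:Z by lia.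
Qed.

Definition grade v : int :=
  proj1_sig (constructive_indefinite_description _ (graded_as_exists v)).

Lemma grade_spec v : graded_as v (grade v).
Proof. by rewrite /grade; case: constructive_indefinite_description. Qed.

Lemma gradeP v g : graded_as v g -> grade v = g.
Proof. exact/graded_as_uniq/grade_spec. Qed.

Lemma grade_slice w : S w -> grade w = u w.
Proof. by move=> Sw; apply: gradeP; exists w, 0%N, 0%N; rewrite subrr mul0r addr0. Qed.

Lemma grade_iter m v : grade (iter m tau v) = grade v - (m * n.+1)%N%:Z.
Proof.
have [w [m1 [m2 [Sw vw ->]]]] := grade_spec v.
apply: gradeP; exists w, m1, (m + m2)%N; split=> //.
  by rewrite -iterD addnC iterD vw -iterD.
nia.
Qed.

Lemma grade_iterV m v : grade (iter m tau' v) = grade v + (m * n.+1)%N%:Z.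
Proof. by rewrite -{2}(iter_tauVK tauVK m v) grade_iter subrK. Qed.

Lemma grade_arrow_slice b : S (src b) -> grade (tgt b) = u (src b) + 1.
Proof.
move=> Ssb; have [Stb|Sttb] := slice_arrow_tgt Ssb.
  by rewrite grade_slice // u_grading.
have [_ _ mesh_path _] := mesh; have [f f_path] := mesh_path b.
have [S_convex _ _] := S_slice; have [vf sf ef lf] := f_path.
have f_S : {in pverts tgt f, forall z, S z} by apply: S_convex; rewrite ?sf ?ef.
have [u_f _] := nice_grading_path u_grading f_path f_S.
have := grade_iter 1 (tgt b); rewrite /= grade_slice // u_f mul1n; lia.
Qed.

Lemma grade_arrow b : grade (tgt b) = grade (src b) + 1.
Proof.
have [w [m1 [m2 [Sw sbw ->]]]] := grade_spec (src b).
have [b1 [sb1 tb1]] := arrow_iter m1 b; have [b2 [sb2 tb2]] := arrow_iterV m2 b1.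
have := grade_arrow_slice (_ : S (src b2)).
rewrite sb2 sb1 sbw iter_tauK // tb2 tb1 grade_iterV grade_iter => /(_ Sw).
nia.
Qed.

Lemma arrow_orbit b x : orbit (src b) x -> exists b', src b' = x /\ orbit (tgt b) (tgt b').
Proof.
move=> /(same_orbitP tauK)[m1 [m2 bx]].
have [b1 [sb1 tb1]] := arrow_iter m1 b; have [b2 [sb2 tb2]] := arrow_iterV m2 b1.
exists b2; rewrite sb2 sb1 bx iter_tauK // tb2 tb1; split=> //.
apply: (same_orbit_trans tauK (same_orbit_iter tau m1 _)).
exact: same_orbit_iterV.
Qed.

Lemma grade_nice : nice_grading src tgt (fun=> True) grade.
Proof. by move=> b _ _; apply: grade_arrow. Qed.

Section WindowAt.
Variable x0 : V.

Definition window v : Prop := grade x0 <= grade v <= grade x0 + n%:Z.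

Lemma window_orbit_uniq x y : window x -> window y -> orbit x y -> x = y.
Proof.
move=> wx wy [[|m] [xy|yx]]; [by []..| move: wy; rewrite -xy | move: wx; rewrite -yx].
  by rewrite /window grade_iter mulSn => wy; move: wx; rewrite /window; lia.
by rewrite /window grade_iter mulSn => wx; move: wy; rewrite /window; lia.
Qed.

Lemma window_meets v : exists2 z, window z & orbit v z.
Proof.
pose q := ((grade v - grade x0) %/ n.+1%:Z)%Z.
have [q_ge0|q_lt0] := lerP 0 q.
  exists (iter `|q|%N tau v); last exact: same_orbit_iter.
  by rewrite /window grade_iter; rewrite /q in q_ge0 *; lia.
exists (iter `|q|%N tau' v); last exact: same_orbit_iterV.
by rewrite /window grade_iterV; rewrite /q in q_lt0 *; lia.
Qed.

Lemma window_arrow_connect b za zb : window za -> window zb ->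
  orbit (src b) za -> orbit (tgt b) zb -> clos_refl_trans V (adjS src tgt window) za zb.
Proof.
move=> wa wb /arrow_orbit[b' [sb' tbb']] tbzb; subst za.
have tb'zb : orbit (tgt b') zb := same_orbit_trans tauK (same_orbit_sym tbb') tbzb.
have [lt_a|ge_a] := ltrP (grade (src b')) (grade x0 + n%:Z).
  have wt : window (tgt b') by move: wa; rewrite /window grade_arrow; lia.
  rewrite -(window_orbit_uniq wt wb tb'zb); apply: rt_step.
  by split=> //; split=> //; exists b'; left.
have [_ _ mesh_path _] := mesh; have [f f_path] := mesh_path b'.
have wtt : window (tau (tgt b')) by move: wa; rewrite /window (grade_iter 1) grade_arrow; lia.
have <- : tau (tgt b') = zb.
  apply: window_orbit_uniq => //; apply: (same_orbit_trans tauK _ tb'zb).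
  exact/same_orbit_sym/(same_orbit_iter tau 1).
apply/adjS_crt_sym/(is_path_connect f_path) => z zf.
have [_ /(_ z zf)] := nice_grading_path grade_nice f_path (fun _ _ => I).
by move: wa; rewrite /window (grade_iter 1) grade_arrow; lia.
Qed.

Lemma window_connected x y : window x -> window y ->
  clos_refl_trans V (adjS src tgt window) x y.
Proof.
have [_ S_meets _] := S_slice; have [_ S_path] := S_conn.
suff lift s t : clos_refl_trans V (adjS src tgt S) s t -> forall zs zt,
    window zs -> window zt -> orbit s zs -> orbit t zt ->
    clos_refl_trans V (adjS src tgt window) zs zt.
  move=> wx wy; have [s [Ss sx]] := S_meets x; have [t [St ty]] := S_meets y.
  by apply: (lift s t (S_path s t Ss St)) => //; apply: same_orbit_sym.
elim=> [v w [_ [_ [b [[<- <-]|[<- <-]]]]]|v|v w z _ IHvw _ IHwz] zs zt ws wt os ot.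
- exact: window_arrow_connect os ot.
- exact: adjS_crt_sym (window_arrow_connect wt ws ot os).
- rewrite (window_orbit_uniq ws wt (same_orbit_trans tauK (same_orbit_sym os) ot)).
  exact: rt_refl.
- have [zw ww ow] := window_meets w.
  exact: rt_trans (IHvw _ _ ws ww os ow) (IHwz _ _ ww wt ow ot).
Qed.

Lemma window_depth : has_depth src tgt window n%:Z.
Proof.
have wx0 : window x0 by rewrite /window; lia.
split; first by split; [exists x0 | exact: window_connected].
exists grade; split; first by move=> b _ _; apply: grade_arrow.
- have [_ _ _ tau_path] := mesh; have [p [vp sp ep lp]] := tau_path (tau' x0).
  have n_le : (n <= plen p)%N by rewrite lp.
  have [p1 [p2 [_ p1_path _]]] := psplit vp n_le.
  rewrite sp tauVK in p1_path.
  have [grade_p1 _] := nice_grading_path grade_nice p1_path (fun _ _ => I).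
  by exists x0, (pstart p2); split=> //; rewrite /window ?grade_p1; lia.
- by move=> v w; rewrite /window; lia.
Qed.

Definition orbit_transversal (l : seq V) : Prop :=
  (forall v, exists2 x, x \in l & orbit v x) /\ {in l &, forall x y, orbit x y -> x = y}.

Lemma transversal_replace l j j' : orbit_transversal l -> j \in l -> orbit j j' ->
  orbit_transversal (seq_replace j j' l).
Proof.
move=> [l_meets l_uniq] jl jj'; pose r y := if y == j then j' else y.
have orbit_r y : orbit y (r y) by rewrite /r; case: eqVneq => [->|_] //; apply: same_orbit_refl.
split=> [v|_ _ /mapP[x xl ->] /mapP[y yl ->] rxy].
  by have [x xl vx] := l_meets v; exists (r x); [apply: map_f | apply: (same_orbit_trans tauK vx)].
congr r; apply: l_uniq => //; apply: (same_orbit_trans tauK (orbit_r x)).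
apply: (same_orbit_trans tauK rxy); exact: same_orbit_sym.
Qed.

Lemma transversal_window l : orbit_transversal l -> {in l, forall x, window x} ->
  forall v, v \in l <-> window v.
Proof.
move=> [l_meets _] l_win v; split=> [/l_win //|wv].
by have [x xl vx] := l_meets v; rewrite (window_orbit_uniq wv (l_win x xl) vx).
Qed.

(* Twice the distance from [grade v] to the interval [[grade x0, grade x0 + n]]. *)
Definition window_dist v : nat :=
  (absz (grade v - grade x0)%R + absz (grade v - grade x0 - n%:Z)%R - n)%N.

Lemma window_dist_eq0 v : window_dist v = 0%N -> window v.
Proof. by rewrite /window_dist /window; lia. Qed.

Lemma mutation_min P l j : (forall v, P v <-> v \in l) -> j \in l ->
  {in l, forall y, grade j <= grade y} ->
  tau_mutation src tgt tau P (fun v => v \in seq_replace j (tau' j) l).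
Proof.
move=> Pl jl j_min; exists j; right; split.
  split=> [|a taj /Pl /j_min]; first exact/Pl.
  by rewrite -taj grade_arrow; lia.
move=> v; rewrite mem_seq_replace //.
split=> [/orP[/andP[vj /Pl Pv]|/eqP->]|[[/Pl vl vj]|<-]].
- by left; split=> //; apply/eqP.
- by right; rewrite tauVK.
- by rewrite vl andbT; apply/orP; left; apply/eqP.
- by rewrite tauK eqxx orbT.
Qed.

Lemma mutation_max P l j : (forall v, P v <-> v \in l) -> j \in l ->
  {in l, forall y, grade y <= grade j} ->
  tau_mutation src tgt tau P (fun v => v \in seq_replace j (tau j) l).
Proof.
move=> Pl jl j_max; exists j; left; split.
  split=> [|a saj /Pl /j_max]; first exact/Pl.
  by rewrite grade_arrow saj; lia.
move=> v; rewrite mem_seq_replace //.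
split=> [/orP[/andP[vj /Pl Pv]|/eqP->]|[[/Pl vl vj]|->]].
- by left; split=> //; apply/eqP.
- by right.
- by rewrite vl andbT; apply/orP; left; apply/eqP.
- by rewrite eqxx orbT.
Qed.

(* Mutating at a vertex of minimal (maximal) grade strictly decreases the total distance
   of a transversal to the window as long as some vertex lies below (above) it. *)
Lemma mutations_to_window P l : orbit_transversal l -> (forall v, P v <-> v \in l) ->
  exists2 P', clos_refl_trans (V -> Prop) (tau_mutation src tgt tau) P P' &
              forall v, P' v <-> window v.
Proof.
have [N] := ubnP (sumn (map window_dist l)); elim: N l P => // N IH l P.
rewrite ltnS => dist_N l_tr Pl.
have [/allP l_win|/allPn[x xl /eqP x_out]] := boolP (all (fun x => window_dist x == 0%N) l).
  exists P; first exact: rt_refl.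
  by move=> v; rewrite Pl; apply: transversal_window => // x /l_win/eqP/window_dist_eq0.
have step j j' : j \in l -> orbit j j' -> (window_dist j' < window_dist j)%N ->
    tau_mutation src tgt tau P (fun v => v \in seq_replace j j' l) ->
    exists2 P', clos_refl_trans (V -> Prop) (tau_mutation src tgt tau) P P' &
                forall v, P' v <-> window v.
  move=> jl jj' lt_dist P_mut.
  have [|||P' mut_P' P'_win] := IH (seq_replace j j' l) (fun v => v \in seq_replace j j' l).
  - exact: leq_trans (sumn_replace_lt jl lt_dist) dist_N.
  - exact: transversal_replace l_tr jl jj'.
  - by [].
  by exists P'; first exact: rt_trans (rt_step _ _ _ _ P_mut) mut_P'.
have l_nil : l != [::] by case: l xl {dist_N IH l_tr Pl step}.
have [x_low|x_high] : grade x < grade x0 \/ grade x0 + n%:Z < grade x.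
  by move: x_out; rewrite /window_dist; lia.
- have [j jl j_min] := exists_seq_min grade l_nil.
  apply: (step j (tau' j)) => //; first exact: (same_orbit_iterV tauVK 1 j).
    have := j_min x xl; rewrite /window_dist (grade_iterV 1); lia.
  exact: mutation_min.
- have [j jl j_max] := exists_seq_min (fun y => - grade y) l_nil.
  apply: (step j (tau j)) => //; first exact: (same_orbit_iter tau 1).
    have := j_max x xl; rewrite /window_dist (grade_iter 1); lia.
  by apply: mutation_max => // y /j_max; lia.
Qed.

End WindowAt.

Lemma slice_mutations_depth : finitely_many_orbits tau ->
  exists S', clos_refl_trans (V -> Prop) (tau_mutation src tgt tau) S S' /\
             has_depth src tgt S' n%:Z.
Proof.
move=> [s0 s0_meets]; have [[x0 _] _] := S_conn; have [_ S_meets S_uniq] := S_slice.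
pose rep v := proj1_sig (constructive_indefinite_description _ (S_meets v)).
have repP v : S (rep v) /\ orbit v (rep v).
  by rewrite /rep; case: constructive_indefinite_description.
pose l0 := map rep s0.
have l0_meets v : exists2 x, x \in l0 & orbit v x.
  have [w [ws0 vw]] := s0_meets v; exists (rep w); first exact: map_f.
  by apply: (same_orbit_trans tauK vw); case: (repP w).
have S_l0 v : S v <-> v \in l0.
  split=> [Sv|/mapP[w _ ->]]; last exact: (proj1 (repP w)).
  have [x xl0 vx] := l0_meets v; have [w _ xw] := mapP xl0.
  by rewrite (S_uniq v x Sv _ vx) // xw; case: (repP w).
have l0_tr : orbit_transversal l0.
  by split=> // x y /S_l0 Sx /S_l0 Sy; apply: S_uniq.
have [S' S_S' S'_win] := mutations_to_window x0 l0_tr S_l0.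
by exists S'; split=> //; apply: has_depth_ext (window_depth x0) => v; rewrite S'_win.
Qed.

End Window.

Theorem proposition4p5 (k : fieldType) (V A : eqType) (src tgt : A -> V)
    (n : nat) (rho : lincomb V A k -> Prop) (tau : V -> V) (S : V -> Prop) :
  stable_translation_quiver src tgt n rho tau ->
  acyclic src tgt ->
  finitely_many_orbits tau ->
  complete_slice src tgt tau S ->
  nicely_graded src tgt S ->
  exists S' : V -> Prop,
    clos_refl_trans (V -> Prop) (tau_mutation src tgt tau) S S' /\
    has_depth src tgt S' n%:Z.
Proof.
move=> [_ rho_rel [tau' tauK tauVK] [rad_n2 [p [vp [lp p_nid]]]] proj_inj] acyc fin_orbits.
move=> S_slice [S_conn [u u_grading]].
pose beta i := proj1_sig (constructive_indefinite_description _ (proj_iso_injP (proj_inj i))).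
have beta_iso i : proj_inj_pairing src tgt rho (tau i) i (beta i).
  by rewrite /beta; case: constructive_indefinite_description.
have rad_n1 : exists p, plen p = n.+1 /\ bound_path src tgt rho p by exists p.
have mesh := stable_translation_mesh rho_rel acyc tauK tauVK rad_n2 rad_n1 beta_iso S_slice S_conn.
exact: slice_mutations_depth tauK tauVK acyc mesh S_slice S_conn u_grading fin_orbits.
Qed.
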